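(* Let $\mathcal{P}$ be a poset and $K:\mathcal{P}\to\mathbf{Simp}$ a simplicial filtration that does not add points, i.e. for any $p\le q$ the vertex sets satisfy $K_0(p)=K_0(q)$. Then the module $\mathbb{V}:=H_0\circ K:\mathcal{P}\to\mathbf{Vec}$ is rank-maximal.
   Context: A simplicial filtration over $\mathcal{P}$ is a functor $K:\mathcal{P}\to\mathbf{Simp}$ with $K(p)\subseteq K(q)$ (and structure maps the inclusions) whenever $p\le q$. $H_0$ is zeroth simplicial homology over a fixed field. A module $\mathbb{V}:\mathcal{P}\to\mathbf{Vec}$ is rank-maximal if for all $p\le q$, $\mathrm{rank}\,\mathbb{V}(p\le q)=\min(\dim\mathbb{V}(p),\dim\mathbb{V}(q))$. *)

From HB Require Import structures.
From mathcomp Require Import all_boot all_order all_algebra.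
Set Implicit Arguments. Unset Strict Implicit. Unset Printing Implicit Defensive.
Import Order.TTheory GRing.Theory Num.Theory.
Local Open Scope ring_scope.

Definition is_simplicial_complex (n : nat) (K : {set {set 'I_n}}) : Prop :=
  set0 \notin K /\
  (forall s t : {set 'I_n}, s \in K -> t \subset s -> t != set0 -> t \in K).

Definition vertices (n : nat) (K : {set {set 'I_n}}) : {set 'I_n} :=
  [set x | [set x] \in K].

Definition simplicial_filtration (d : Order.disp_t) (P : porderType d) (n : nat)
  (K : P -> {set {set 'I_n}}) : Prop :=
  (forall p, is_simplicial_complex (K p)) /\
  (forall p q : P, (p <= q)%O -> K p \subset K q).

(* Chains with coefficients in F, inside F^n = 'rV[F]_n (basis: vertices).
   C0 K = row space of 0-chains of K (spanned by its vertices);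
   B1 K = row space of 0-boundaries, spanned by d{x,y} = y - x for edges. *)
Definition C0 (F : fieldType) (n : nat) (K : {set {set 'I_n}}) : 'M[F]_n :=
  (\sum_(x < n | [set x] \in K) <<(delta_mx 0 x : 'rV[F]_n)>>)%MS.

Definition B1 (F : fieldType) (n : nat) (K : {set {set 'I_n}}) : 'M[F]_n :=
  (\sum_(x < n) \sum_(y < n | (x != y) && ([set x; y] \in K))
     <<(delta_mx 0 y - delta_mx 0 x : 'rV[F]_n)>>)%MS.

(* H_0(K) = C0 K / B1 K.  Right multiplication by cokermx (B1 L) is a linear
   map on 'rV_n whose kernel is exactly the row space of B1 L, i.e. a model
   of the quotient map onto C_0 / B_1(L).  Hence:
   dim H_0(K)                              = rank of C0 K under that map for L = K;
   rank of H_0(K) -> H_0(L) (induced by K \subset L) = rank of the image of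
   C0 K under the quotient map of L. *)
Definition H0dim (F : fieldType) (n : nat) (K : {set {set 'I_n}}) : nat :=
  \rank (C0 F K *m cokermx (B1 F K)).

Definition H0rank (F : fieldType) (n : nat) (K L : {set {set 'I_n}}) : nat :=
  \rank (C0 F K *m cokermx (B1 F L)).

Definition H0_rank_maximal (F : fieldType) (d : Order.disp_t) (P : porderType d)
  (n : nat) (K : P -> {set {set 'I_n}}) : Prop :=
  forall p q : P, (p <= q)%O ->
    H0rank F (K p) (K q) = minn (H0dim F (K p)) (H0dim F (K q)).

(* When no vertices are added, the 0-chains of K p and K q coincide and only
   the boundaries grow, so H_0(K p) -> H_0(K q) is the surjection
   C_0 / B_1(K p) -> C_0 / B_1(K q).  Its rank is dim H_0(K q), which is the
   smaller of the two dimensions. *)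
From mathcomp Require Import all_boot all_order all_algebra.
From mathcomp Require Import zify.
Set Implicit Arguments.
Unset Strict Implicit.
Unset Printing Implicit Defensive.

Local Open Scope ring_scope.

Lemma mxrank_mul_cokermxS (F : fieldType) (m m1 m2 n : nat) (C : 'M[F]_(m, n))
    (B1 : 'M[F]_(m1, n)) (B2 : 'M[F]_(m2, n)) :
  (B1 <= B2)%MS -> (\rank (C *m cokermx B2) <= \rank (C *m cokermx B1))%N.
Proof.
move=> sB12.
(* The kernel of [cokermx B] is the row space of [B], so it grows with [B]. *)
have sker : (kermx (cokermx B1) <= kermx (cokermx B2))%MS.
  rewrite sub_kermx -submxE; apply: submx_trans sB12.
  by rewrite submxE mulmx_ker.
have := mxrank_mul_ker C (cokermx B1); have := mxrank_mul_ker C (cokermx B2).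
have : (\rank (C :&: kermx (cokermx B1)) <= \rank (C :&: kermx (cokermx B2)))%N.
  exact/mxrankS/capmxS.
lia.
Qed.

Section ZerothHomology.

Variables (F : fieldType) (n : nat).
Implicit Types K L : {set {set 'I_n}}.

Lemma C0_vertices K L : vertices K = vertices L -> C0 F K = C0 F L.
Proof.
move=> /setP eqKL; apply: eq_bigl => x.
by have := eqKL x; rewrite !inE.
Qed.

Lemma B1S K L : K \subset L -> (B1 F K <= B1 F L)%MS.
Proof.
move=> sKL; apply/sumsmx_subP => x _; apply/sumsmx_subP => y /andP[xy Kxy].
apply: (sumsmx_sup x) => //; apply: (sumsmx_sup y) => //.
by rewrite xy (subsetP sKL).
Qed.

Lemma H0rank_same_vertices K L :
  K \subset L -> vertices K = vertices L ->
  H0rank F K L = minn (H0dim F K) (H0dim F L).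
Proof.
move=> sKL eqV; rewrite /H0rank /H0dim -(C0_vertices eqV).
by rewrite (minn_idPr (mxrank_mul_cokermxS _ (B1S sKL))).
Qed.

End ZerothHomology.

Theorem mainTheorem10 (F : fieldType) (d : Order.disp_t) (P : porderType d)
  (n : nat) (K : P -> {set {set 'I_n}}) :
  simplicial_filtration K ->
  (forall p q : P, (p <= q)%O -> vertices (K p) = vertices (K q)) ->
  H0_rank_maximal F K.
Proof.
move=> [_ monoK] eqV p q pq.
exact: H0rank_same_vertices (monoK p q pq) (eqV p q pq).
Qed.
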